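(* Let $\mathbb W=(W,I,\preccurlyeq,\circ,{}^\sim,{}^-,{}^\neg)$ be a DqRA-frame. For upsets $U$ of $(W,\preccurlyeq)$ define ${\sim}U=\{w\mid w^-\notin U\}$, $-U=\{w\mid w^\sim\notin U\}$, and $\neg U=\{x\in W\mid x^\neg\notin U\}$. Then $\mathbb W^+=(\mathsf{Up}(W,\preccurlyeq),\cap,\cup,\circ,I,\sim,-,\neg)$ is a distributive quasi relation algebra (DqRA).
   Context: For a set $W$ and $\circ:W\times W\to\mathcal P(W)$, $U\circ V=\bigcup\{a\circ b\mid a\in U,b\in V\}$, $x\circ V=\{x\}\circ V$, $U\circ y=U\circ\{y\}$; superscripts compose left to right, e.g. $x^{\sim\neg}=(x^\sim)^\neg$. $\mathsf{Up}(W,\preccurlyeq)$ is the set of upsets. A DInFL-frame is a tuple $(W,I,\preccurlyeq,\circ,{}^\sim,{}^-)$ with $I\subseteq W$, $\preccurlyeq$ a partial order, $\circ:W\times W\to\mathcal P(W)$, ${}^\sim,{}^-:W\to W$, such that for all $u,v,x,y,z$: (F1) $x\preccurlyeq y$ iff $y\in I\circ x$ iff $y\in x\circ I$; (F2) $x\preccurlyeq y$, $x\in I$ imply $y\in I$; (F3) $x\preccurlyeq y$, $x\in u\circ v$ imply $y\in u\circ v$; (F4) $(x\circ y)\circ z=x\circ(y\circ z)$; (F5) $z^\sim\in x\circ y$ iff $y^-\in z\circ x$; (F6) $x^{\sim-}\preccurlyeq x$ and $x^{-\sim}\preccurlyeq x$. A DqRA-frame is a tuple $(W,I,\preccurlyeq,\circ,{}^\sim,{}^-,{}^\neg)$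 such that the first six components form a DInFL-frame and ${}^\neg:W\to W$ satisfies: (F7) $x^{\neg\neg}=x$; (F8) $x\preccurlyeq y$ implies $y^\neg\preccurlyeq x^\neg$; (F9) $z^-\in x\circ y$ iff $z^\neg\in y^{\sim\neg}\circ x^{\sim\neg}$. An InFL-algebra is $(A,\wedge,\vee,\cdot,1,\sim,-)$ with a lattice, a monoid, and $a\cdot b\leqslant c\iff a\leqslant -(b\cdot{\sim}c)\iff b\leqslant{\sim}(-c\cdot a)$; $a+b:=-({\sim}b\cdot{\sim}a)$. A quasi relation algebra is $(A,\wedge,\vee,\cdot,1,\sim,-,\neg)$ where the $\neg$-free reduct is an InFL-algebra, $\neg\neg a=a$, $\neg(a\wedge b)=\neg a\vee\neg b$, and $\neg(a\cdot b)=\neg a+\neg b$. A DqRA is a quasi relation algebra with distributive lattice reduct. *)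

(* [circ x y z] means  z ∈ x ∘ y. *)
Record DInFL_frame (W : Type) (I : W -> Prop) (le : W -> W -> Prop)
    (circ : W -> W -> W -> Prop) (tl mn : W -> W) : Prop := {
  fr_refl : forall x, le x x;
  fr_antisym : forall x y, le x y -> le y x -> x = y;
  fr_trans : forall x y z, le x y -> le y z -> le x z;
  F1a : forall x y, le x y <-> (exists i, I i /\ circ i x y);
  F1b : forall x y, le x y <-> (exists i, I i /\ circ x i y);
  F2 : forall x y, le x y -> I x -> I y;
  F3 : forall u v x y, le x y -> circ u v x -> circ u v y;
  F4 : forall x y z w,
      (exists a, circ x y a /\ circ a z w) <-> (exists b, circ y z b /\ circ x b w);
  F5 : forall x y z, circ x y (tl z) <-> circ z x (mn y);
  F6a : forall x, le (mn (tl x)) x;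
  F6b : forall x, le (tl (mn x)) x
}.

Record DqRA_frame (W : Type) (I : W -> Prop) (le : W -> W -> Prop)
    (circ : W -> W -> W -> Prop) (tl mn ng : W -> W) : Prop := {
  dq_DInFL : @DInFL_frame W I le circ tl mn;
  F7 : forall x, ng (ng x) = x;
  F8 : forall x y, le x y -> le (ng y) (ng x);
  F9 : forall x y z, circ x y (mn z) <-> circ (ng (tl y)) (ng (tl x)) (ng z)
}.

Definition upset {W : Type} (le : W -> W -> Prop) (U : W -> Prop) : Prop :=
  forall x y, le x y -> U x -> U y.

Definition UpT {W : Type} (le : W -> W -> Prop) : Type := {U : W -> Prop | upset le U}.

Definition set_circ {W : Type} (circ : W -> W -> W -> Prop) (U V : W -> Prop) : W -> Prop :=
  fun w => exists a b, U a /\ V b /\ circ a b w.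
Definition set_tl {W : Type} (mn : W -> W) (U : W -> Prop) : W -> Prop := fun w => ~ U (mn w).
Definition set_mn {W : Type} (tl : W -> W) (U : W -> Prop) : W -> Prop := fun w => ~ U (tl w).
Definition set_ng {W : Type} (ng : W -> W) (U : W -> Prop) : W -> Prop := fun w => ~ U (ng w).

Section Alg.
Context {A : Type} (meet join dot : A -> A -> A) (one : A) (tl mn ng : A -> A).
Definition ale (a b : A) : Prop := meet a b = a.
Definition aplus (a b : A) : A := mn (dot (tl b) (tl a)).

Record is_DqRA : Prop := {
  meetC : forall a b, meet a b = meet b a;
  meetA : forall a b c, meet a (meet b c) = meet (meet a b) c;
  joinC : forall a b, join a b = join b a;
  joinA : forall a b c, join a (join b c) = join (join a b) c;
  absorb1 : forall a b, meet a (join a b) = a;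
  absorb2 : forall a b, join a (meet a b) = a;
  distr : forall a b c, meet a (join b c) = join (meet a b) (meet a c);
  dotA : forall a b c, dot a (dot b c) = dot (dot a b) c;
  dot1l : forall a, dot one a = a;
  dot1r : forall a, dot a one = a;
  resid1 : forall a b c, ale (dot a b) c <-> ale a (mn (dot b (tl c)));
  resid2 : forall a b c, ale a (mn (dot b (tl c))) <-> ale b (tl (dot (mn c) a));
  ngK : forall a, ng (ng a) = a;
  ng_meet : forall a b, ng (meet a b) = join (ng a) (ng b);
  ng_dot : forall a b, ng (dot a b) = aplus (ng a) (ng b)
}.
End Alg.

(* Upsets are closed under all the operations: under ~ and - because
   w |-> w^- and w |-> w^~ are antitone (they are mutually inverse, by (F5)
   with (F1), and (F6)), under ¬ by (F8), under ∘ by (F3), and I is an upset by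
   (F2).  Associativity and the unit laws of ∘ are (F4) and (F1), and
   residuation is (F5) read through the bijections ^~ and ^-.  The only axiom
   needing more is ¬(U ∘ V) = ¬U + ¬V; after unfolding + and using that ¬, ~
   and - are involutive on upsets, it is exactly (F9). *)

From Stdlib Require Import Classical FunctionalExtensionality PropExtensionality ProofIrrelevance.

#[local] Arguments fr_refl {W I le circ tl mn} _ _.
#[local] Arguments fr_antisym {W I le circ tl mn} _ _ _ _ _.
#[local] Arguments F1a {W I le circ tl mn} _ _ _.
#[local] Arguments F1b {W I le circ tl mn} _ _ _.
#[local] Arguments F2 {W I le circ tl mn} _ _ _ _ _.
#[local] Arguments F3 {W I le circ tl mn} _ _ _ _ _ _ _.
#[local] Arguments F4 {W I le circ tl mn} _ _ _ _ _.
#[local] Arguments F5 {W I le circ tl mn} _ _ _ _.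
#[local] Arguments F6a {W I le circ tl mn} _ _.
#[local] Arguments F6b {W I le circ tl mn} _ _.
#[local] Arguments dq_DInFL {W I le circ tl mn ng} _.
#[local] Arguments F7 {W I le circ tl mn ng} _ _.
#[local] Arguments F8 {W I le circ tl mn ng} _ _ _ _.
#[local] Arguments F9 {W I le circ tl mn ng} _ _ _ _.

Section Upsets.
Context {W : Type} {le : W -> W -> Prop}.

Lemma UpT_ext (U V : UpT le) :
  (forall w, proj1_sig U w <-> proj1_sig V w) -> U = V.
Proof.
  destruct U as [U hU], V as [V hV]; simpl; intros h.
  assert (U = V) by (extensionality w; apply propositional_extensionality; auto).
  subst. f_equal. apply proof_irrelevance.
Qed.

Definition up_meet (U V : UpT le) : UpT le.
Proof.
  refine (exist _ (fun w => proj1_sig U w /\ proj1_sig V w) _).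
  destruct U as [U hU], V as [V hV]; intros x y h [a b]; simpl; eauto.
Defined.

Definition up_join (U V : UpT le) : UpT le.
Proof.
  refine (exist _ (fun w => proj1_sig U w \/ proj1_sig V w) _).
  destruct U as [U hU], V as [V hV]; intros x y h [a|b]; simpl; eauto.
Defined.

Definition up_compl {f : W -> W} (f_anti : forall x y, le x y -> le (f y) (f x))
    (U : UpT le) : UpT le.
Proof.
  refine (exist _ (fun w => ~ proj1_sig U (f w)) _).
  destruct U as [U hU]; simpl; intros x y h nx uy.
  apply nx; eapply hU; [apply f_anti, h | exact uy].
Defined.

Lemma ale_up_meet (U V : UpT le) :
  ale up_meet U V <-> forall w, proj1_sig U w -> proj1_sig V w.
Proof.
  unfold ale; split.
  - intros h w hw. pose proof (f_equal (fun X => proj1_sig X w) h) as e.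
    simpl in e. rewrite <- e in hw. tauto.
  - intros h. apply UpT_ext; simpl; intro w. split; [tauto | auto].
Qed.

Ltac pointwise := apply UpT_ext; intro; simpl; tauto.

Lemma up_meetC U V : up_meet U V = up_meet V U. Proof. pointwise. Qed.
Lemma up_meetA U V X : up_meet U (up_meet V X) = up_meet (up_meet U V) X.
Proof. pointwise. Qed.
Lemma up_joinC U V : up_join U V = up_join V U. Proof. pointwise. Qed.
Lemma up_joinA U V X : up_join U (up_join V X) = up_join (up_join U V) X.
Proof. pointwise. Qed.
Lemma up_meetKU U V : up_meet U (up_join U V) = U. Proof. pointwise. Qed.
Lemma up_joinKI U V : up_join U (up_meet U V) = U. Proof. pointwise. Qed.
Lemma up_meet_joinr U V X :
  up_meet U (up_join V X) = up_join (up_meet U V) (up_meet U X).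
Proof. pointwise. Qed.

Section Complement.
Context {f : W -> W} (f_anti : forall x y, le x y -> le (f y) (f x)).

Lemma up_complK : (forall x, f (f x) = x) -> forall U, up_compl f_anti (up_compl f_anti U) = U.
Proof.
  intros fK U; apply UpT_ext; intro w; simpl; rewrite fK.
  split; [apply NNPP | tauto].
Qed.

Lemma up_compl_meet U V :
  up_compl f_anti (up_meet U V) = up_join (up_compl f_anti U) (up_compl f_anti V).
Proof.
  apply UpT_ext; intro w; simpl. destruct (classic (proj1_sig U (f w))); tauto.
Qed.

End Complement.
End Upsets.

Section DInFLComplexAlgebra.
Context {W : Type} {I : W -> Prop} {le : W -> W -> Prop}
  {circ : W -> W -> W -> Prop} {tl mn : W -> W} (HF : DInFL_frame W I le circ tl mn).

Lemma le_mn_tl z b : le z (mn b) <-> le b (tl z).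
Proof.
  split; intro h.
  - apply (F1b HF) in h as [i [Ii c]].
    apply (F1a HF); exists i; split; auto; apply (F5 HF); auto.
  - apply (F1a HF) in h as [i [Ii c]].
    apply (F1b HF); exists i; split; auto; apply (F5 HF); auto.
Qed.

Lemma mn_tl x : mn (tl x) = x.
Proof. apply (fr_antisym HF); [apply (F6a HF) | apply le_mn_tl, (fr_refl HF)]. Qed.

Lemma tl_mn x : tl (mn x) = x.
Proof. apply (fr_antisym HF); [apply (F6b HF) | apply le_mn_tl, (fr_refl HF)]. Qed.

Lemma mn_anti x y : le x y -> le (mn y) (mn x).
Proof. intro h; apply le_mn_tl; rewrite tl_mn; exact h. Qed.

Lemma tl_anti x y : le x y -> le (tl y) (tl x).
Proof. intro h; apply le_mn_tl; rewrite mn_tl; exact h. Qed.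

Lemma circ_mn_tl p q w : circ (mn p) (mn q) (mn w) <-> circ (tl p) (tl q) (tl w).
Proof.
  split; intro h.
  - apply (F5 HF (mn q) w (mn p)) in h; rewrite tl_mn in h.
    apply (F5 HF); rewrite mn_tl, <- (tl_mn q); apply (F5 HF); rewrite mn_tl; exact h.
  - apply (F5 HF) in h; rewrite mn_tl, <- (tl_mn q) in h; apply (F5 HF) in h.
    rewrite mn_tl in h; apply (F5 HF (mn q) w (mn p)); rewrite tl_mn; exact h.
Qed.

Definition up_dot (U V : UpT le) : UpT le.
Proof.
  refine (exist _ (set_circ circ (proj1_sig U) (proj1_sig V)) _).
  intros x y h [a [b [ha [hb hc]]]]; exists a, b; split; [|split]; [exact ha | exact hb | exact (F3 HF _ _ _ _ h hc)].
Defined.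

Definition up_one : UpT le := exist _ I (F2 HF).
Definition up_tl : UpT le -> UpT le := up_compl mn_anti.
Definition up_mn : UpT le -> UpT le := up_compl tl_anti.

Lemma up_dotA U V X : up_dot U (up_dot V X) = up_dot (up_dot U V) X.
Proof.
  apply UpT_ext; intro w; simpl; unfold set_circ; split.
  - intros [x [y [ux [[x' [y' [vx [xy c1]]]] c2]]]].
    destruct (proj2 (F4 HF x x' y' w) (ex_intro _ y (conj c1 c2))) as [m [m1 m2]].
    exists m, y'; repeat split; auto; exists x, x'; auto.
  - intros [x [y [[x' [y' [ux [vy c1]]]] [xy c2]]]].
    destruct (proj1 (F4 HF x' y' y w) (ex_intro _ x (conj c1 c2))) as [m [m1 m2]].
    exists x', m; repeat split; auto; exists y', y; auto.
Qed.

Lemma up_dot1l U : up_dot up_one U = U.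
Proof.
  apply UpT_ext; intro w; destruct U as [U hU]; simpl; unfold set_circ; split.
  - intros [i [b [Ii [Ub c]]]]. eapply hU; [apply (F1a HF); eauto | exact Ub].
  - intros Uw. destruct (proj1 (F1a HF w w) (fr_refl HF w)) as [i [Ii c]].
    exists i, w; auto.
Qed.

Lemma up_dot1r U : up_dot U up_one = U.
Proof.
  apply UpT_ext; intro w; destruct U as [U hU]; simpl; unfold set_circ; split.
  - intros [b [i [Ub [Ii c]]]]. eapply hU; [apply (F1b HF); eauto | exact Ub].
  - intros Uw. destruct (proj1 (F1b HF w w) (fr_refl HF w)) as [i [Ii c]].
    exists w, i; auto.
Qed.

Lemma up_resid_left U V X :
  ale up_meet (up_dot U V) X <-> ale up_meet U (up_mn (up_dot V (up_tl X))).
Proof.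
  rewrite !ale_up_meet; simpl; unfold set_circ; split.
  - intros L w uw [x [y [vx [nxy c]]]]. apply nxy, L.
    exists w, x; repeat split; auto; apply (F5 HF); auto.
  - intros R w [x [y [ux [vy c]]]]. apply NNPP; intro nxw. apply (R x ux).
    exists y, (tl w); rewrite mn_tl; repeat split; auto.
    apply (F5 HF); rewrite mn_tl; auto.
Qed.

Lemma up_resid_right U V X :
  ale up_meet U (up_mn (up_dot V (up_tl X))) <->
  ale up_meet V (up_tl (up_dot (up_mn X) U)).
Proof.
  rewrite !ale_up_meet; simpl; unfold set_circ; split.
  - intros L w vw [x [y [nxx [uy c]]]]. apply (F5 HF) in c.
    apply (L y uy). exists w, (tl (tl x)); rewrite mn_tl; repeat split; auto.
    apply (F5 HF); rewrite mn_tl; auto.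
  - intros R w uw [x [y [vx [nxy c]]]]. apply (F5 HF) in c.
    apply (R x vx). exists (mn (mn y)), w; rewrite tl_mn; repeat split; auto.
    apply (F5 HF); rewrite tl_mn; auto.
Qed.

End DInFLComplexAlgebra.

Section DqRAComplexAlgebra.
Context {W : Type} {I : W -> Prop} {le : W -> W -> Prop}
  {circ : W -> W -> W -> Prop} {tl mn ng : W -> W} (HQ : DqRA_frame W I le circ tl mn ng).
Let HF := dq_DInFL HQ.

Lemma circ_tl_ng x y w : circ x y (tl w) <-> circ (ng (mn y)) (ng (mn x)) (ng w).
Proof.
  rewrite <- (tl_mn HF (mn y)), <- (tl_mn HF (mn x)), <- (F9 HQ).
  rewrite (circ_mn_tl HF), !(tl_mn HF); tauto.
Qed.

Definition up_ng : UpT le -> UpT le := up_compl (F8 HQ).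

Lemma up_ng_dot U V :
  up_ng (up_dot HF U V) =
  aplus (up_dot HF) (up_tl HF) (up_mn HF) (up_ng U) (up_ng V).
Proof.
  apply UpT_ext; intro w; unfold aplus; simpl; unfold set_circ; simpl.
  split; intros N E; apply N.
  - destruct E as [x [y [vx [uy c]]]]. exists (ng (mn y)), (ng (mn x)).
    split; [apply NNPP; auto|]. split; [apply NNPP; auto|]. apply circ_tl_ng; auto.
  - destruct E as [x [y [ux [vy c]]]]. exists (tl (ng y)), (tl (ng x)).
    rewrite !(mn_tl HF), !(F7 HQ). repeat split; try tauto.
    apply circ_tl_ng. rewrite !(mn_tl HF), !(F7 HQ); auto.
Qed.

Lemma upsets_is_DqRA :
  is_DqRA up_meet up_join (up_dot HF) (up_one HF)
    (up_tl HF) (up_mn HF) up_ng.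
Proof.
  constructor.
  - apply up_meetC.
  - apply up_meetA.
  - apply up_joinC.
  - apply up_joinA.
  - apply up_meetKU.
  - apply up_joinKI.
  - apply up_meet_joinr.
  - apply up_dotA.
  - apply up_dot1l.
  - apply up_dot1r.
  - apply up_resid_left.
  - apply up_resid_right.
  - apply up_complK, (F7 HQ).
  - apply up_compl_meet.
  - apply up_ng_dot.
Qed.

End DqRAComplexAlgebra.

Theorem mainTheorem9 (W : Type) (I : W -> Prop) (le : W -> W -> Prop)
    (circ : W -> W -> W -> Prop) (tl mn ng : W -> W) :
  @DqRA_frame W I le circ tl mn ng ->
  exists (meet join dot : UpT le -> UpT le -> UpT le) (one : UpT le)
         (tlU mnU ngU : UpT le -> UpT le),
    (forall U V w, proj1_sig (meet U V) w <-> proj1_sig U w /\ proj1_sig V w) /\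
    (forall U V w, proj1_sig (join U V) w <-> proj1_sig U w \/ proj1_sig V w) /\
    (forall U V w, proj1_sig (dot U V) w <-> set_circ circ (proj1_sig U) (proj1_sig V) w) /\
    (forall w, proj1_sig one w <-> I w) /\
    (forall U w, proj1_sig (tlU U) w <-> set_tl mn (proj1_sig U) w) /\
    (forall U w, proj1_sig (mnU U) w <-> set_mn tl (proj1_sig U) w) /\
    (forall U w, proj1_sig (ngU U) w <-> set_ng ng (proj1_sig U) w) /\
    is_DqRA meet join dot one tlU mnU ngU.
Proof.
  intros HQ; set (HF := dq_DInFL HQ).
  exists up_meet, up_join, (up_dot HF), (up_one HF),
    (up_tl HF), (up_mn HF), (up_ng HQ).
  do 7 (split; [intros; simpl; tauto |]).
  apply upsets_is_DqRA.
Qed.
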